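(* Let $b\ge0$ be an integer and let $t$ be a join node of a rooted nice tree decomposition of the Tanner graph $G$ with children $t_1,t_2$ ($B_t=B_{t_1}=B_{t_2}$). For $I\subseteq B_t^c$, $Q\subseteq B_t^v$, $d\in\{0,\dots,b\}$ let $$F_t(I,Q,d)=\min\{f_{t_1}(I_1,Q,d_1)+f_{t_2}(I_2,Q,d_2)-|Q|\},\qquad G_t(I,Q,d)=\sum g_{t_1}(I_1,Q,d_1)\,g_{t_2}(I_2,Q,d_2),$$ the minimum taken over all $(I_1,I_2,d_1,d_2)$ with $I_1,I_2\subseteq B_t^c$, $d_1,d_2\ge0$ integers, $I=I_1\oplus I_2\oplus\Gamma_o(G_t[Q\cup B_t^c])$ and $d=d_1+d_2$, and the sum over those tuples attaining the minimum. Then: if $Q\ne\emptyset$, $f_t(I,Q,d)=F_t(I,Q,d)$ and $g_t(I,Q,d)=G_t(I,Q,d)$; if $Q=\emptyset$, $f_t(I,Q,d)=\min\{F_t(I,Q,d),f_{t_1}(I,Q,d),f_{t_2}(I,Q,d)\}$ and $$g_t(I,Q,d)=\mathbb 1_{f_t=F_t}G_t(I,Q,d)+\mathbb 1_{f_t=f_{t_1}}g_{t_1}(I,Q,d)+\mathbb 1_{f_t=f_{t_2}}g_{t_2}(I,Q,d),$$ all functions evaluated at $(I,Q,d)$, where $\mathbb 1_{x=y}$ is $1$ if $x=y$ and $0$ otherwise (whenever the minimum is finite).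
   Context: $G=(\mathcal L\cup\mathcal R,E)$ is a Tanner graph (bipartite, variable nodes $\mathcal L$, check nodes $\mathcal R$). For a subgraph $H$ of $G$ and $S\subseteq\mathcal L$ in $H$, $H[S]$ is the subgraph of $H$ induced by $S$ together with its neighbours in $H$; for $L\subseteq\mathcal L$, $R\subseteq\mathcal R$, $H[L\cup R]$ is the subgraph of $H$ induced on the vertex set $L\cup R$. $\Gamma_o(\cdot)$ is the set of odd-degree check nodes in the indicated subgraph; $\oplus$ is symmetric difference. A trapping set is a nonempty subset of $\mathcal L$. A rooted nice tree decomposition $(T,(B_t))$ is a rooted tree decomposition (every vertex and edge lies in some bag; bags containing a given vertex form a connected subtree) where every node has at most two children, root and leaves have empty bags, a node with two children (join node) has the same bag as each child, and a node $t$ with one child $t'$ has $B_t=B_{t'}\cup\{v\}$ or $B_t=B_{t'}\setminus\{v\}$. For a node $t$: $B_t^c=B_t\cap\mathcal R$, $B_t^v=B_t\cap\mathcal L$; $G_t$ is the subgraph of $G$ induced on the union of the bags of all descendants of $t$ (including $t$); $\mathcal L(G_t)$ is its set of variable nodes. For $I\subseteq B_t^c$, $Q\subseteq B_t^v$ and an integer $d\ge0$, a trapping set $S$ has parameters $(I,Q,d)$ in $G_t$ if $S\subseteq\mathcal L(G_t)$, $S\cap B_t^v=Q$, $\Gamma_o(G_t[S])\cap B_t^c=I$ and $|\Gamma_o(G_t[S])\setminus I|=d$. $f_t(I,Q,d)$ is the minimum size of a trapping set with parameters $(I,Q,d)$ in $G_t$ ($+\infty$ if none), and $g_t(I,Q,d)$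 is the number of such trapping sets of size $f_t(I,Q,d)$ ($0$ if none). *)

From mathcomp Require Import all_boot.
Set Implicit Arguments. Unset Strict Implicit. Unset Printing Implicit Defensive.

(* Extended naturals nat ∪ {+oo}: None = +oo. *)
Definition omin (a b : option nat) : option nat :=
  match a, b with
  | None, _ => b
  | _, None => a
  | Some x, Some y => Some (minn x y)
  end.

Definition oadd (a b : option nat) : option nat :=
  match a, b with
  | Some x, Some y => Some (x + y)
  | _, _ => None
  end.

Definition symd (T : finType) (A B : {set T}) : {set T} := (A :\: B) :|: (B :\: A).

Section Tanner.
(* Tanner graph: variable nodes L, check nodes R, vertex type L + R,
   edges l -- r whenever adj l r. *)
Variables (L R : finType) (adj : L -> R -> bool).

Definition gadj (x y : L + R) : bool :=
  match x, y with
  | inl l, inr r => adj l r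
  | inr r, inl l => adj l r
  | _, _ => false
  end.

Definition gamma_o (U : {set L + R}) : {set R} :=
  [set c : R | (inr c \in U) && odd #|[set y in U | gadj (inr c) y]|].

(* H[S]: for H the subgraph induced on W, the subgraph induced by S
   together with its neighbours in H *)
Definition sub_nb (W : {set L + R}) (S : {set L}) : {set L + R} :=
  [set x in W | (x \in @inl L R @: S) || [exists l in S, gadj (inl l) x]].

Variables (N : finType) (par : N -> option N) (bag : N -> {set L + R}).

Definition desc (u t : N) : bool := connect [rel a b | par a == Some b] u t.
Definition children (t : N) : {set N} := [set c | par c == Some t].
Definition tree_adj : rel N := fun x y => (par x == Some y) || (par y == Some x).
Definition connected_in (S : {set N}) : Prop :=
  forall x y, x \in S -> y \in S ->
    connect [rel a b | [&& a \in S, b \in S & tree_adj a b]] x y.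

Definition rooted_tree : Prop :=
  exists r, par r = None /\ forall u, desc u r.

Definition tree_decomposition : Prop :=
  [/\ rooted_tree,
      (forall v : L + R, exists t, v \in bag t),
      (forall l r, adj l r -> exists t, (inl l \in bag t) && (inr r \in bag t))
    & (forall v : L + R, connected_in [set t | v \in bag t])].

Definition rooted_nice_td : Prop :=
  tree_decomposition /\
  [/\
      (forall t, #|children t| <= 2),
      (forall t, par t = None -> bag t = set0),
      (forall t, children t = set0 -> bag t = set0),
      (forall t c, #|children t| = 2 -> c \in children t -> bag c = bag t)
    &
      (forall t c, children t = [set c] ->
        exists v, bag t = v |: bag c \/ bag t = bag c :\ v)].

Definition Bc (t : N) : {set R} := [set c | inr c \in bag t].
Definition Bv (t : N) : {set L} := [set l | inl l \in bag t].
Definition VG (t : N) : {set L + R} := \bigcup_(u | desc u t) bag u.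
Definition LG (t : N) : {set L} := [set l | inl l \in VG t].

Definition TS (t : N) (I : {set R}) (Q : {set L}) (d : nat) : {set {set L}} :=
  [set S : {set L} | [&& S != set0, S \subset LG t, S :&: Bv t == Q,
     gamma_o (sub_nb (VG t) S) :&: Bc t == I
   & #|gamma_o (sub_nb (VG t) S) :\: I| == d]].

Definition fDP (t : N) I Q (d : nat) : option nat :=
  \big[omin/None]_(S in TS t I Q d) Some #|S|.
Definition gDP (t : N) I Q (d : nat) : nat :=
  #|[set S in TS t I Q d | Some #|S| == fDP t I Q d]|.

Definition indQ (t : N) (Q : {set L}) : {set L + R} :=
  [set x in VG t | (x \in @inl L R @: Q) || (x \in @inr L R @: Bc t)].

Definition okT (t : N) (I : {set R}) (Q : {set L}) (d : nat)
  (p : {set R} * {set R} * 'I_d.+1 * 'I_d.+1) : bool :=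
  let: (I1, I2, d1, d2) := p in
  [&& I1 \subset Bc t, I2 \subset Bc t,
      I == symd (symd I1 I2) (gamma_o (indQ t Q)) & (d1 + d2 == d)%N].

Definition costT (t1 t2 : N) (Q : {set L}) (d : nat)
  (p : {set R} * {set R} * 'I_d.+1 * 'I_d.+1) : option nat :=
  let: (I1, I2, d1, d2) := p in
  omap (fun n => n - #|Q|) (oadd (fDP t1 I1 Q d1) (fDP t2 I2 Q d2)).

Notation tup R d := ({set R} * {set R} * 'I_d.+1 * 'I_d.+1)%type.

Definition Fjoin (t t1 t2 : N) I Q (d : nat) : option nat :=
  \big[omin/None]_(p : tup R d | okT t I Q p) costT t1 t2 Q p.

Definition Gjoin (t t1 t2 : N) I Q (d : nat) : nat :=
  \sum_(p : tup R d | okT t I Q p && (costT t1 t2 Q p == Fjoin t t1 t2 I Q d))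
     (let: (I1, I2, d1, d2) := p in gDP t1 I1 Q d1 * gDP t2 I2 Q d2).

End Tanner.

From Pilot Require Import Defs.
From mathcomp Require Import all_boot zify.
Set Implicit Arguments. Unset Strict Implicit. Unset Printing Implicit Defensive.

(* A trapping set S of G_t splits into S_i = S ∩ L(G_{t_i}). The subtrees below t
   share no node, so G_{t_1} and G_{t_2} meet only in B_t: hence S_1 ∩ S_2 = Q, a check
   node outside B_t lies on one side and sees only the variables of that side, and a
   check node c of B_t has degree deg S_1 c + deg S_2 c - deg Q c in G_t[S]. This gives
   Γ_o(G_t[S]) ∩ B_t^c = I_1 ⊕ I_2 ⊕ Γ_o(G_t[Q ∪ B_t^c]), d = d_1 + d_2 and
   |S| = |S_1| + |S_2| - |Q|, and gluing two compatible sets inverts the splitting.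
   If Q ≠ ∅ both parts are nonempty, so trapping sets of G_t correspond to compatible
   pairs of trapping sets of the children, and f_t, g_t become a minimum and a sum over
   the tuples (I_1, I_2, d_1, d_2). If Q = ∅ one part may be empty, and S is then a
   trapping set of a single child with the same parameters. *)

Definition oleq (a : option nat) (k : nat) : bool := if a is Some x then x <= k else false.

Lemma oleq_ext a b : (forall k, oleq a k = oleq b k) -> a = b.
Proof.
case: a => [x|]; case: b => [y|] //= eq_ab.
- by congr Some; apply/anti_leq; rewrite -eq_ab leqnn eq_ab leqnn.
- by have := eq_ab x; rewrite leqnn.
- by have := eq_ab y; rewrite leqnn.
Qed.

Lemma oleq_omin a b k : oleq (omin a b) k = oleq a k || oleq b k.
Proof. by case: a => [x|]; case: b => [y|] //=; rewrite ?orbF // geq_min. Qed.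

Lemma oleq_bigmin_seq (I : eqType) (r : seq I) (P : pred I) F k :
  oleq (\big[omin/None]_(i <- r | P i) F i) k = has (fun i => P i && oleq (F i) k) r.
Proof.
elim: r => [|x r IHr]; first by rewrite big_nil.
by rewrite big_cons /=; case: (P x) => //=; rewrite oleq_omin IHr.
Qed.

Lemma oleq_bigmin (I : finType) (P : pred I) F k :
  oleq (\big[omin/None]_(i | P i) F i) k = [exists i, P i && oleq (F i) k].
Proof.
rewrite oleq_bigmin_seq; apply/hasP/existsP => [[i _ ?]|[i ?]]; first by exists i.
by exists i; rewrite ?mem_index_enum.
Qed.

Lemma oleq_omap_subn q a k : oleq (omap (fun n => n - q) a) k = oleq a (k + q).
Proof. by case: a => [x|] //=; rewrite leq_subLR addnC. Qed.

Lemma oleq_oadd a b k : oleq (oadd a b) k ->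
  exists x y, [/\ a = Some x, b = Some y & x + y <= k].
Proof. by case: a => [x|]; case: b => [y|] //= ?; exists x, y. Qed.

Lemma symds0 (T : finType) (A : {set T}) : symd A set0 = A.
Proof. by apply/setP => x; rewrite !inE; case: (x \in A). Qed.

Section MinWeight.
Variables (T : finType) (w : T -> nat).
Implicit Types (A B : {set T}) (m : nat).

Definition min_weight A : option nat := \big[omin/None]_(x in A) Some (w x).
Definition card_weight A m : nat := #|[set x in A | w x == m]|.

Lemma oleq_min_weight A k : oleq (min_weight A) k = [exists x in A, w x <= k].
Proof. exact: oleq_bigmin. Qed.

Lemma min_weight_le A x : x \in A -> exists m, min_weight A = Some m /\ m <= w x.
Proof.
move=> xA; have := oleq_min_weight A (w x).
have -> : [exists y in A, w y <= w x] by apply/existsP; exists x; rewrite xA leqnn.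
by case: (min_weight A) => [m|] //= ?; exists m.
Qed.

Lemma min_weightP A m : min_weight A = Some m ->
  (exists2 x, x \in A & w x = m) /\ (forall x, x \in A -> m <= w x).
Proof.
move=> Am; have lb x : x \in A -> m <= w x.
  by move=> xA; have [m' []] := min_weight_le xA; rewrite Am => -[->].
split=> //; have := oleq_min_weight A m; rewrite Am /= leqnn.
move=> /esym/existsP[x /andP[xA le_xm]]; exists x => //.
by apply/anti_leq; rewrite le_xm lb.
Qed.

Lemma min_weight_None A : min_weight A = None -> A = set0.
Proof.
move=> A0; apply/setP => x; rewrite inE; apply/negP => /min_weight_le[m []].
by rewrite A0.
Qed.

Lemma min_weightU A B : min_weight (A :|: B) = omin (min_weight A) (min_weight B).
Proof.
apply: oleq_ext => k; rewrite oleq_omin !oleq_min_weight.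
apply/existsP/orP => [[x /andP[]]|[] /existsP[x /andP[xA lex]]].
- by rewrite inE => /orP[] xA lex; [left|right]; apply/existsP; exists x; rewrite xA.
- by exists x; rewrite inE xA.
- by exists x; rewrite inE xA orbT.
Qed.

Lemma card_weight_sub A B m : A \subset B -> min_weight B = Some m ->
  card_weight A m = (Some m == min_weight A) * card_weight A m.
Proof.
move=> sAB Bm; case: eqP => [_|Am]; first by rewrite mul1n.
rewrite mul0n; apply/eqP; rewrite cards_eq0; apply/eqP/setP => x; rewrite !inE.
apply/negP => /andP[xA /eqP wx]; apply: Am.
have [m' [Am' le_m'x]] := min_weight_le xA; rewrite Am'.
have [[y yA wy] _] := min_weightP Am'.
have [_ lbB] := min_weightP Bm.
by congr Some; apply/eqP; rewrite eqn_leq -{1}wy lbB ?(subsetP sAB) //= -wx.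
Qed.

Lemma card_weightU A B m : [disjoint A & B] ->
  card_weight (A :|: B) m = card_weight A m + card_weight B m.
Proof.
move=> dAB; rewrite /card_weight -cardsUI.
have -> : [set x in A | w x == m] :&: [set x in B | w x == m] = set0.
  apply/setP=> x; rewrite !inE; apply/negP => /and3P[/andP[xA _] xB _].
  by move/disjointFr: dAB => /(_ _ xA); rewrite xB.
by rewrite cards0 addn0; apply: eq_card => x; rewrite !inE andb_orl.
Qed.

Lemma card_weight_pairs A B ma mb n :
  min_weight A = Some ma -> min_weight B = Some mb -> n <= ma + mb ->
  #|[set x in setX A B | w x.1 + w x.2 == n]| =
    (n == ma + mb) * (card_weight A ma * card_weight B mb).
Proof.
move=> Ama Bmb le_n; have [_ lbA] := min_weightP Ama; have [_ lbB] := min_weightP Bmb.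
rewrite /card_weight -cardsX; case: eqP => [->|ne_n]; last first.
  apply/eqP; rewrite cards_eq0; apply/eqP/setP => -[x y]; rewrite !inE /=.
  apply/negP => /andP[/andP[xA yB] /eqP sum_n]; apply: ne_n; apply/anti_leq.
  by rewrite le_n -sum_n leq_add ?lbA ?lbB.
rewrite mul1n; apply: eq_card => -[x y]; rewrite !inE /=.
case xA: (x \in A); case yB: (y \in B); rewrite ?andbF //=.
have := lbA _ xA; have := lbB _ yB => le_mb le_ma.
by apply/eqP/andP => [?|[/eqP -> /eqP ->]] //; split; apply/eqP; lia.
Qed.
End MinWeight.

Lemma card_set_pair (T1 T2 : finType) (P : T1 -> T2 -> bool) :
  #|[set x : T1 * T2 | P x.1 x.2]| = \sum_a #|[set y | P a y]|.
Proof.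
transitivity (\sum_a \sum_(b | P a b) 1).
  by rewrite (pair_big_dep xpredT P (fun _ _ => 1)) /= sum1dep_card.
by apply: eq_bigr => a _; rewrite sum1dep_card.
Qed.

Lemma path_exit (T : eqType) (e : rel T) (X : pred T) x p :
  path e x p -> X x -> ~~ X (last x p) -> exists a b, [/\ X a, ~~ X b & e a b].
Proof.
elim: p x => [|y p IHp] x /=; first by move=> _ ->.
move=> /andP[exy py] Xx Xlast; case Xy: (X y); first exact: IHp Xy Xlast.
by exists x, y; rewrite Xy.
Qed.

Section Ancestors.
Variables (N : finType) (par : N -> option N).
Local Notation desc := (desc par).

Definition anc (n : nat) (u : N) : option N := iter n (obind par) (Some u).

Lemma desc_anc u v : desc u v -> exists n, anc n u = Some v.
Proof.
move/connectP=> [p pth ->]; exists (size p).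
elim: p u pth => [|x p IHp] u // /andP[/eqP par_u pth].
by rewrite /anc iterSr /= par_u; apply: IHp.
Qed.

Lemma anc_root_uniq r u a b : par r = None -> anc a u = Some r -> anc b u = Some r -> a = b.
Proof.
move=> root_r; have stuck n : iter n.+1 (obind par) (Some r) = None.
  by elim: n => [|n IHn]; rewrite iterS ?IHn.
wlog le_ab : a b / a <= b => [wlog_ab ua ub|ua ub].
  by case/orP: (leq_total a b) => ?; [|apply/esym]; apply: wlog_ab.
case: (ltngtP a b) le_ab => // lt_ab _; move: ub.
rewrite /anc -(subnK (ltnW lt_ab)) iterD -/(anc a u) ua.
by move: (subn_gt0 a b); rewrite lt_ab; case: (b - a) => // n _; rewrite stuck.
Qed.

Lemma desc_par_step u v w : par u = Some v -> desc v w -> desc u w.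
Proof. by move=> par_u; apply: connect_trans; apply: connect1; rewrite /= par_u. Qed.

Lemma desc_child u v : desc u v -> u != v -> exists c, par c = Some v /\ desc u c.
Proof.
move/connectP=> [p pth ->]; elim: p u pth => [|x p IHp] u /=; first by rewrite eqxx.
move=> /andP[/eqP par_u pth] ne_u; case: (eqVneq x (last x p)) => [<-|ne_x].
  by exists u; split; [rewrite par_u|apply: connect0].
by have [c [par_c desc_xc]] := IHp x pth ne_x; exists c; rewrite (desc_par_step par_u).
Qed.

Lemma desc_par u v : desc u v -> u != v -> exists w, par u = Some w /\ desc w v.
Proof.
move/connectP=> [[|x p] /=]; first by move=> _ ->; rewrite eqxx.
by move=> /andP[/eqP par_u pth] -> _; exists x; split => //; apply/connectP; exists p.
Qed.

(* In a rooted tree a node has a unique depth, so it lies below at most one child of t. *)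
Lemma desc_siblings t a b u : rooted_tree par ->
  par a = Some t -> par b = Some t -> a != b -> desc u a -> desc u b -> False.
Proof.
move=> [r [root_r desc_r]] par_a par_b ne_ab /desc_anc[ka ua] /desc_anc[kb ub].
have [ja ar] := desc_anc (desc_r a); have [jb br] := desc_anc (desc_r b).
have [i tr] := desc_anc (desc_r t).
have anc_child c : par c = Some t -> anc (i + 1) c = Some r by rewrite /anc iterD /= => ->.
have depth_u c k j : anc k u = Some c -> anc j c = Some r -> anc (j + k) u = Some r.
  by rewrite /anc iterD => ->.
have ja_i := anc_root_uniq root_r ar (anc_child a par_a).
have jb_i := anc_root_uniq root_r br (anc_child b par_b).
have := anc_root_uniq root_r (depth_u _ _ _ ua ar) (depth_u _ _ _ ub br).
rewrite ja_i jb_i => /addnI eq_k; move: ua; rewrite eq_k ub => -[eq_ba].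
by rewrite eq_ba eqxx in ne_ab.
Qed.
End Ancestors.

Section SharedBags.
Variables (L R : finType) (N : finType) (par : N -> option N) (bag : N -> {set L + R}).
Hypothesis bag_connected : forall v : L + R, connected_in par [set t | v \in bag t].

(* A path in the tree between two bags containing v leaves the subtree of c
   only through the edge (c, t), whose endpoint t would have v in its bag. *)
Lemma desc_of_shared_bag t c v u u1 : par c = Some t ->
  v \in bag u -> v \in bag u1 -> desc par u1 c -> v \notin bag t -> desc par u c.
Proof.
move=> par_c vu vu1 u1c vt; apply/negPn/negP => not_uc.
have in_set_v x : v \in bag x -> x \in [set t | v \in bag t] by rewrite inE.
have /connectP[p pth last_p] := bag_connected (in_set_v _ vu1) (in_set_v _ vu).
have not_last : ~~ desc par (last u1 p) c by rewrite -last_p.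
have [a [b' [ac not_b'c /and3P[va vb' adj_ab']]]] :=
  path_exit (X := fun x => desc par x c) pth u1c not_last.
rewrite inE in vb'; case/orP: adj_ab' => /eqP par_ab'.
- have [eq_ac|ne_ac] := eqVneq a c.
    by move: par_ab'; rewrite eq_ac par_c => -[eq_tb']; rewrite eq_tb' vb' in vt.
  have [w [par_a desc_wc]] := desc_par ac ne_ac.
  by move: par_ab'; rewrite par_a => -[eq_wb']; rewrite -eq_wb' desc_wc in not_b'c.
- by rewrite (desc_par_step par_ab' ac) in not_b'c.
Qed.
End SharedBags.

Section OddChecks.
Variables (L R : finType) (adj : L -> R -> bool).

Definition deg (S : {set L}) (c : R) : nat := #|[set l in S | adj l c]|.

Lemma deg0 c : deg set0 c = 0.
Proof. by apply: eq_card0 => l; rewrite !inE. Qed.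

Lemma deg_setUI (S1 S2 : {set L}) c : deg (S1 :|: S2) c + deg (S1 :&: S2) c = deg S1 c + deg S2 c.
Proof.
rewrite /deg -[RHS]cardsUI; congr (_ + _); apply: eq_card => l; rewrite !inE;
  by case: (l \in S1); case: (l \in S2); case: (adj l c).
Qed.

Lemma gamma_oE (U : {set L + R}) :
  gamma_o adj U = [set c | (inr c \in U) && odd #|[set l | (inl l \in U) && adj l c]|].
Proof.
apply/setP => c; rewrite !inE.
have -> : [set y in U | gadj adj (inr c) y] = inl @: [set l | (inl l \in U) && adj l c].
  apply/setP => -[l|r]; rewrite !inE.
    by rewrite mem_imset ?inE //; apply: inl_inj.
  by rewrite andbF; apply/esym/imsetP => -[].
by rewrite card_imset //; apply: inl_inj.
Qed.

Lemma gamma_sub_nb (W : {set L + R}) (S : {set L}) : S \subset [set l | inl l \in W] ->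
  gamma_o adj (sub_nb adj W S) = [set c | (inr c \in W) && odd (deg S c)].
Proof.
move=> sSW; rewrite gamma_oE; apply/setP => c; rewrite !inE.
have in_nb l : (inl l \in sub_nb adj W S) = (l \in S).
  rewrite inE mem_imset; last by apply: inl_inj.
  have -> : [exists l0 in S, gadj adj (inl l0) (inl l)] = false.
    by apply/existsPn => x /=; rewrite andbF.
  by rewrite orbF andb_idl // => lS; move/subsetP: sSW => /(_ _ lS); rewrite inE.
have -> : #|[set l | (inl l \in sub_nb adj W S) && adj l c]| = deg S c.
  by apply: eq_card => l; rewrite inE in_nb inE.
have -> : (inr c \in [set inl x | x in S]) = false by apply/imsetP => -[].
case odd_c: (odd (deg S c)); rewrite ?andbF ?andbT //=.
apply/andb_idr => _; have : 0 < deg S c by case: (deg S c) odd_c.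
by case/card_gt0P => l; rewrite inE => /andP[lS alc]; apply/existsP; exists l; rewrite lS.
Qed.

Variables (N : finType) (par : N -> option N) (bag : N -> {set L + R}).

Lemma bag_sub_VG t : bag t \subset VG par bag t.
Proof. by apply/subsetP => x xt; apply/bigcupP; exists t => //; apply: connect0. Qed.

Lemma gamma_indQ t (Q : {set L}) : Q \subset Bv bag t ->
  gamma_o adj (indQ par bag t Q) = [set c in Bc bag t | odd (deg Q c)].
Proof.
move=> sQ; have sVG := subsetP (bag_sub_VG t).
have inl_Q l : (inl l \in indQ par bag t Q) = (l \in Q).
  rewrite inE mem_imset; last by apply: inl_inj.
  have -> : (inl l \in [set inr x | x in Bc bag t]) = false by apply/imsetP => -[].
  by rewrite orbF andb_idl // => lQ; apply: sVG; move/subsetP: sQ => /(_ _ lQ); rewrite inE.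
have inr_Bc c : (inr c \in indQ par bag t Q) = (c \in Bc bag t).
  rewrite inE mem_imset; last by move=> x y [].
  have -> : (inr c \in [set inl x | x in Q]) = false by apply/imsetP => -[].
  by rewrite andb_idl // inE => /sVG.
apply/setP => c; rewrite gamma_oE [in LHS]inE inr_Bc [in RHS]inE; congr (_ && odd _).
by apply: eq_card => l; rewrite [in LHS]inE inl_Q inE.
Qed.

Definition gammaG t (S : {set L}) : {set R} := gamma_o adj (sub_nb adj (VG par bag t) S).

Lemma gammaGE t (S : {set L}) : S \subset LG par bag t ->
  gammaG t S = [set c | (inr c \in VG par bag t) && odd (deg S c)].
Proof. exact: gamma_sub_nb. Qed.

Lemma gammaG0 t : gammaG t set0 = set0.
Proof. by rewrite gammaGE ?sub0set //; apply/setP => c; rewrite !inE deg0 andbF. Qed.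

Lemma inTS t I Q d S : (S \in TS adj par bag t I Q d) =
  [&& S != set0, S \subset LG par bag t, S :&: Bv bag t == Q,
      gammaG t S :&: Bc bag t == I & #|gammaG t S :\: Bc bag t| == d].
Proof.
rewrite inE -/(gammaG t S); case: (gammaG t S :&: Bc bag t =P I) => [<-|]; last by rewrite !andbF.
by rewrite setDIr setDv set0U.
Qed.

Lemma fDP_min_weight t I Q d :
  fDP adj par bag t I Q d = min_weight (fun S : {set L} => #|S|) (TS adj par bag t I Q d).
Proof. by []. Qed.

Lemma gDP_card_weight t I Q d m : fDP adj par bag t I Q d = Some m ->
  gDP adj par bag t I Q d = card_weight (fun S : {set L} => #|S|) (TS adj par bag t I Q d) m.
Proof.
by move=> fm; rewrite /gDP fm; apply: eq_card => S; rewrite !inE (inj_eq (@Some_inj _)).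
Qed.

Lemma card_bag_le_TS t I Q d S : S \in TS adj par bag t I Q d -> #|Q| <= #|S|.
Proof. by rewrite inTS => /and5P[_ _ /eqP <- _ _]; rewrite subset_leq_card ?subsetIl. Qed.

End OddChecks.

Section JoinNode.
Variables (L R : finType) (adj : L -> R -> bool) (N : finType) (par : N -> option N)
  (bag : N -> {set L + R}).
Hypothesis Htd : rooted_nice_td adj par bag.
Variables t t1 t2 : N.
Hypotheses (par_t1 : par t1 = Some t) (par_t2 : par t2 = Some t) (t1_neq_t2 : t1 != t2).

Local Notation desc := (desc par).
Local Notation VG := (VG par bag).
Local Notation LG := (LG par bag).
Local Notation Bc := (Bc bag).
Local Notation Bv := (Bv bag).
Local Notation gammaG := (gammaG adj par bag).

Lemma children_joinE : children par t = [set t1; t2].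
Proof.
case: Htd => _ [le2 _ _ _ _].
have sub : [set t1; t2] \subset children par t.
  by apply/subsetP => x; rewrite !inE => /orP[] /eqP ->; rewrite ?par_t1 ?par_t2.
by apply/esym/eqP; rewrite eqEcard sub cards2 t1_neq_t2 le2.
Qed.

Lemma children_join c : par c = Some t -> c = t1 \/ c = t2.
Proof.
move=> par_c; have : c \in children par t by rewrite inE par_c.
by rewrite children_joinE !inE => /orP[] /eqP; [left|right].
Qed.

Lemma bag_join_child c : par c = Some t -> bag c = bag t.
Proof.
case: Htd => _ [_ _ _ join_bag _] par_c; apply: join_bag; last by rewrite inE par_c.
by rewrite children_joinE cards2 t1_neq_t2.
Qed.

Lemma Bc_join_child c : par c = Some t -> Bc c = Bc t.
Proof. by move=> par_c; rewrite /Defs.Bc (bag_join_child par_c). Qed.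

Lemma Bv_join_child c : par c = Some t -> Bv c = Bv t.
Proof. by move=> par_c; rewrite /Defs.Bv (bag_join_child par_c). Qed.

Lemma bag_join_sub_VG c : par c = Some t -> bag t \subset VG c.
Proof. by move=> par_c; rewrite -(bag_join_child par_c) bag_sub_VG. Qed.

Lemma Bv_sub_LG c : par c = Some t -> Bv t \subset LG c.
Proof.
by move=> par_c; apply/subsetP => l; rewrite !inE => /(subsetP (bag_join_sub_VG par_c)).
Qed.

Lemma desc_join u : desc u t = [|| u == t, desc u t1 | desc u t2].
Proof.
apply/idP/idP.
- have [//|ne_ut] := eqVneq u t.
  move=> /desc_child /(_ ne_ut) [c [par_c desc_uc]].
  by case: (children_join par_c) => <-; rewrite desc_uc ?orbT.
- case/or3P => [/eqP->|desc_u|desc_u]; first exact: connect0.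
  + exact: connect_trans desc_u (desc_par_step par_t1 (connect0 _ t)).
  + exact: connect_trans desc_u (desc_par_step par_t2 (connect0 _ t)).
Qed.

Lemma VG_join : VG t = VG t1 :|: VG t2.
Proof.
apply/setP => x; rewrite inE; apply/bigcupP/orP => [[u]|].
- rewrite desc_join => /or3P[/eqP->|desc_u|desc_u] xu.
  + by left; apply: (subsetP (bag_join_sub_VG par_t1)).
  + by left; apply/bigcupP; exists u.
  + by right; apply/bigcupP; exists u.
- by case=> /bigcupP[u desc_u xu]; exists u; rewrite // desc_join desc_u ?orbT.
Qed.

Lemma LG_join : LG t = LG t1 :|: LG t2.
Proof. by apply/setP => l; rewrite !inE VG_join inE. Qed.

(* Otherwise desc_of_shared_bag would put the t2-side bag containing v below t1 too. *)
Lemma VG_join_inter v : v \in VG t1 -> v \in VG t2 -> v \in bag t.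
Proof.
move=> /bigcupP[u1 desc_u1 vu1] /bigcupP[u2 desc_u2 vu2]; apply/negPn/negP => vt.
case: Htd => [[Hroot _ _ Hconn] _].
have desc_u2' := desc_of_shared_bag Hconn par_t1 vu2 vu1 desc_u1 vt.
exact: desc_siblings Hroot par_t1 par_t2 t1_neq_t2 desc_u2' desc_u2.
Qed.

Lemma LG_join_inter l : l \in LG t1 -> l \in LG t2 -> l \in Bv t.
Proof. by rewrite !inE; apply: VG_join_inter. Qed.

(* The bag covering the edge (l, r) contains r, hence lies below c. *)
Lemma adj_join_side c l r : par c = Some t -> adj l r -> inr r \in VG c -> r \notin Bc t ->
  inl l \in VG c.
Proof.
move=> par_c alr /bigcupP[u desc_u ru] rt; case: Htd => [[_ _ cover_edge Hconn] _].
have [w /andP[lw rw]] := cover_edge l r alr.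
rewrite inE in rt; apply/bigcupP; exists w => //.
exact: (desc_of_shared_bag Hconn par_c rw ru desc_u rt).
Qed.

Lemma deg_join_side c (S Sc : {set L}) r : par c = Some t -> S :&: LG c = Sc ->
  r \notin Bc t -> inr r \in VG c -> deg adj S r = deg adj Sc r.
Proof.
move=> par_c side_c rt rc; apply: eq_card => l; rewrite !inE -side_c inE.
case alr: (adj l r); rewrite ?andbF // !andbT.
by rewrite inE (adj_join_side par_c alr rc rt) andbT.
Qed.

Section Glue.
Variables S1 S2 Q : {set L}.
Hypotheses (sub1 : S1 \subset LG t1) (sub2 : S2 \subset LG t2).
Hypotheses (bag1 : S1 :&: Bv t = Q) (bag2 : S2 :&: Bv t = Q).

Let inBv1 l : l \in S1 -> (l \in Bv t) = (l \in Q).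
Proof. by move=> lS1; rewrite -bag1 in_setI lS1. Qed.

Let inBv2 l : l \in S2 -> (l \in Bv t) = (l \in Q).
Proof. by move=> lS2; rewrite -bag2 in_setI lS2. Qed.

Lemma glue_setI : S1 :&: S2 = Q.
Proof.
apply/setP => l; rewrite inE; apply/andP/idP => [[lS1 lS2]|lQ].
  by rewrite -inBv1 // LG_join_inter ?(subsetP sub1) ?(subsetP sub2).
by move: lQ (lQ); rewrite -{1}bag1 -bag2 !in_setI => /andP[-> _] /andP[-> _].
Qed.

Lemma glue_sub : S1 :|: S2 \subset LG t.
Proof. by rewrite LG_join setUSS. Qed.

Lemma glue_bag : (S1 :|: S2) :&: Bv t = Q.
Proof. by rewrite setIUl bag1 bag2 setUid. Qed.

Lemma glue_side1 : (S1 :|: S2) :&: LG t1 = S1.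
Proof.
rewrite setIUl (setIidPl sub1); apply/setUidPl/subsetP => l; rewrite inE => /andP[lS2 l1].
have lQ : l \in Q by rewrite -inBv2 // LG_join_inter ?(subsetP sub2).
by move: lQ; rewrite -bag1 inE => /andP[].
Qed.

Lemma glue_side2 : (S1 :|: S2) :&: LG t2 = S2.
Proof.
rewrite setIUl (setIidPl sub2); apply/setUidPr/subsetP => l; rewrite inE => /andP[lS1 l2].
have lQ : l \in Q by rewrite -inBv1 // LG_join_inter ?(subsetP sub1).
by move: lQ; rewrite -bag2 inE => /andP[].
Qed.

Lemma glue_card : #|S1 :|: S2| + #|Q| = #|S1| + #|S2|.
Proof. by rewrite -glue_setI cardsUI. Qed.

(* Inside B_t the degrees add up with the overlap Q counted twice. *)
Lemma glue_gamma_bag : gammaG t (S1 :|: S2) :&: Bc t =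
  symd (symd (gammaG t1 S1 :&: Bc t) (gammaG t2 S2 :&: Bc t)) (gamma_o adj (indQ par bag t Q)).
Proof.
have sQ : Q \subset Bv t by rewrite -bag1 subsetIr.
rewrite (gammaGE adj glue_sub) (gammaGE adj sub1) (gammaGE adj sub2) gamma_indQ //.
apply/setP => r; rewrite !inE; case rt: (inr r \in bag t); rewrite ?andbF //.
have rVG c : par c = Some t -> inr r \in VG c by move/bag_join_sub_VG/subsetP; apply.
rewrite (subsetP (bag_sub_VG _ _ t) _ rt) !rVG //=.
have := congr1 odd (deg_setUI adj S1 S2 r); rewrite glue_setI !oddD.
by case: (odd (deg adj (S1 :|: S2) r)); case: (odd (deg adj Q r));
   case: (odd (deg adj S1 r)); case: (odd (deg adj S2 r)).
Qed.

(* Outside B_t a check node of G_t belongs to exactly one side and sees only that side. *)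
Lemma glue_gamma_out :
  gammaG t (S1 :|: S2) :\: Bc t = (gammaG t1 S1 :\: Bc t) :|: (gammaG t2 S2 :\: Bc t).
Proof.
rewrite (gammaGE adj glue_sub) (gammaGE adj sub1) (gammaGE adj sub2).
apply/setP => r; rewrite !inE VG_join inE.
case rt: (inr r \in bag t) => //=; have rBc : r \notin Bc t by rewrite inE rt.
case r1: (inr r \in VG t1); case r2: (inr r \in VG t2) => //=.
- by rewrite (VG_join_inter r1 r2) in rt.
- by rewrite (deg_join_side par_t1 glue_side1 rBc r1) orbF.
- by rewrite (deg_join_side par_t2 glue_side2 rBc r2).
Qed.

Lemma card_glue_gamma_out : #|gammaG t (S1 :|: S2) :\: Bc t| =
  #|gammaG t1 S1 :\: Bc t| + #|gammaG t2 S2 :\: Bc t|.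
Proof.
rewrite glue_gamma_out cardsU.
suff -> : (gammaG t1 S1 :\: Bc t) :&: (gammaG t2 S2 :\: Bc t) = set0 by rewrite cards0 subn0.
apply/setP => r; rewrite (gammaGE adj sub1) (gammaGE adj sub2) !inE.
apply/negP => /andP[/andP[rt /andP[r1 _]] /andP[_ /andP[r2 _]]].
by rewrite (VG_join_inter r1 r2) in rt.
Qed.

End Glue.

Lemma setI_LG_join (S : {set L}) : S \subset LG t -> S = (S :&: LG t1) :|: (S :&: LG t2).
Proof. by move=> sS; rewrite -setIUr -LG_join; apply/esym/setIidPl. Qed.

Section JoinParams.
Variables (I : {set R}) (Q : {set L}) (d : nat).
Local Notation tup := ({set R} * {set R} * 'I_d.+1 * 'I_d.+1)%type.
Local Notation TS := (TS adj par bag).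
Local Notation card := (fun S : {set L} => #|S|).

(* The [inord] casts are exact on TS_both, where both counts are at most d. *)
Definition split_params (S : {set L}) : tup :=
  (gammaG t1 (S :&: LG t1) :&: Bc t, gammaG t2 (S :&: LG t2) :&: Bc t,
   inord #|gammaG t1 (S :&: LG t1) :\: Bc t|, inord #|gammaG t2 (S :&: LG t2) :\: Bc t|).

Definition join_pair (p : tup) (S1 S2 : {set L}) : bool :=
  [&& okT adj par bag t I Q p, S1 \in TS t1 p.1.1.1 Q p.1.2 & S2 \in TS t2 p.1.1.2 Q p.2].

Definition TS_both : {set {set L}} :=
  [set S in TS t I Q d | (S :&: LG t1 != set0) && (S :&: LG t2 != set0)].

Lemma in_TS_both S : (S \in TS_both) =
  [&& S \in TS t I Q d, S :&: LG t1 != set0 & S :&: LG t2 != set0].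
Proof. by rewrite [LHS]in_set. Qed.

Lemma TS_both_sub S : S \in TS_both -> S \subset LG t.
Proof. by rewrite inE inTS => /andP[/and5P[]]. Qed.

Lemma TS_both_split S : S \in TS_both -> join_pair (split_params S) (S :&: LG t1) (S :&: LG t2).
Proof.
rewrite inE inTS => /andP[/and5P[_ sS /eqP bagS /eqP gam_in /eqP gam_out] /andP[ne1 ne2]].
have bag_side c : par c = Some t -> S :&: LG c :&: Bv t = Q.
  by move=> par_c; rewrite -setIA (setIidPr (Bv_sub_LG par_c)).
have bag1 := bag_side _ par_t1; have bag2 := bag_side _ par_t2.
have sub1 := subsetIr S (LG t1); have sub2 := subsetIr S (LG t2).
have eq_bag := glue_gamma_bag sub1 sub2 bag1 bag2.
have eq_out := card_glue_gamma_out sub1 sub2 bag1 bag2.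
rewrite -(setI_LG_join sS) in eq_bag eq_out.
have le1 : #|gammaG t1 (S :&: LG t1) :\: Bc t| < d.+1 by rewrite ltnS -gam_out eq_out leq_addr.
have le2 : #|gammaG t2 (S :&: LG t2) :\: Bc t| < d.+1 by rewrite ltnS -gam_out eq_out leq_addl.
rewrite /join_pair /split_params /okT /= !inTS !inordK // (Bc_join_child par_t1)
  (Bc_join_child par_t2) (Bv_join_child par_t1) (Bv_join_child par_t2) bag1 bag2.
by rewrite ne1 ne2 !subsetIr -eq_bag gam_in -eq_out gam_out !eqxx.
Qed.

Lemma TS_both_glue p S1 S2 : join_pair p S1 S2 ->
  [/\ S1 :|: S2 \in TS_both, split_params (S1 :|: S2) = p, (S1 :|: S2) :&: LG t1 = S1,
      (S1 :|: S2) :&: LG t2 = S2 & #|S1 :|: S2| + #|Q| = #|S1| + #|S2|].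
Proof.
case: p => [[[I1 I2] d1] d2]; rewrite /join_pair /okT /= !inTS.
move=> /and3P[/and4P[_ _ /eqP eqI /eqP eqd] /and5P[ne1 sub1 bag1 in1 out1]].
move=> /and5P[ne2 sub2 bag2 in2 out2].
rewrite (Bv_join_child par_t1) (Bc_join_child par_t1) in bag1 in1 out1.
rewrite (Bv_join_child par_t2) (Bc_join_child par_t2) in bag2 in2 out2.
move: bag1 bag2 in1 in2 out1 out2 => /eqP bag1 /eqP bag2 /eqP in1 /eqP in2 /eqP out1 /eqP out2.
have side1 := glue_side1 sub1 sub2 bag1 bag2; have side2 := glue_side2 sub1 sub2 bag1 bag2.
split; rewrite ?(glue_card sub1 sub2 bag1 bag2) //.
- rewrite inE inTS side1 side2 ne1 ne2 (glue_sub sub1 sub2) (glue_bag bag1 bag2).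
  rewrite (glue_gamma_bag sub1 sub2 bag1 bag2) (card_glue_gamma_out sub1 sub2 bag1 bag2).
  rewrite in1 in2 out1 out2 -eqI eqd !eqxx !andbT /=.
  by apply: contra ne1 => /eqP S0; rewrite -subset0 -S0 subsetUl.
- by rewrite /split_params side1 side2 in1 in2 out1 out2 !inord_val.
Qed.

Lemma oleq_costT (p : tup) k : oleq (costT adj par bag t1 t2 Q p) k =
  [exists S1, exists S2, [&& S1 \in TS t1 p.1.1.1 Q p.1.2,
     S2 \in TS t2 p.1.1.2 Q p.2 & #|S1| + #|S2| <= k + #|Q|]].
Proof.
case: p => [[[I1 I2] d1] d2]; rewrite /costT oleq_omap_subn /= !fDP_min_weight.
apply/idP/existsP => [/oleq_oadd[x [y [minx miny le_xy]]]|[S1 /existsP[S2]]].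
- have [[S1 S1in eq_x] _] := min_weightP minx; have [[S2 S2in eq_y] _] := min_weightP miny.
  rewrite -eq_x -eq_y in le_xy.
  by exists S1; apply/existsP; exists S2; rewrite S1in S2in.
- move=> /and3P[S1in S2in le_sum].
  have [m1 [-> le1]] := min_weight_le card S1in; have [m2 [-> le2]] := min_weight_le card S2in.
  exact: leq_trans (leq_add le1 le2) le_sum.
Qed.

Lemma min_weight_TS_both : min_weight card TS_both = Fjoin adj par bag t t1 t2 I Q d.
Proof.
apply: oleq_ext => k; rewrite oleq_min_weight /Fjoin oleq_bigmin.
apply/existsP/existsP => [[S /andP[Sboth leS]]|[p /andP[okp]]].
- have jp := TS_both_split Sboth; have [_ _ _ _ cardS] := TS_both_glue jp.
  exists (split_params S); move: jp => /and3P[okp in1 in2].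
  rewrite okp oleq_costT; apply/existsP; exists (S :&: LG t1); apply/existsP; exists (S :&: LG t2).
  by rewrite in1 in2 -cardS -(setI_LG_join (TS_both_sub Sboth)) leq_add2r.
- rewrite oleq_costT => /existsP[S1 /existsP[S2 /and3P[in1 in2 le_sum]]].
  have jp : join_pair p S1 S2 by rewrite /join_pair okp in1 in2.
  have [Sboth _ _ _ cardS] := TS_both_glue jp.
  by exists (S1 :|: S2); rewrite Sboth -(leq_add2r #|Q|) cardS.
Qed.

Definition join_pairs_at (m : nat) : {set tup * ({set L} * {set L})} :=
  [set x | join_pair x.1 x.2.1 x.2.2 && (#|x.2.1| + #|x.2.2| == m + #|Q|)].

Lemma card_weight_TS_both m : card_weight card TS_both m = #|join_pairs_at m|.
Proof.
pose sp S := (split_params S, (S :&: LG t1, S :&: LG t2)).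
have sp_inj : {in [set S in TS_both | #|S| == m] &, injective sp}.
  move=> S S' /setIdP[/TS_both_sub sS _] /setIdP[/TS_both_sub sS' _].
  by move/(congr1 snd) => [e1 e2]; rewrite (setI_LG_join sS) (setI_LG_join sS') e1 e2.
rewrite /card_weight -(card_in_imset sp_inj); apply: eq_card => -[p [S1 S2]].
rewrite inE /=; apply/imsetP/andP => [[S]|[jp /eqP card_sum]].
- rewrite inE => /andP[Sboth /eqP cardS] [-> -> ->].
  have jp := TS_both_split Sboth; have [_ _ _ _ cardS'] := TS_both_glue jp.
  by rewrite jp -cardS' -(setI_LG_join (TS_both_sub Sboth)) cardS.
- have [Sboth eq_p side1 side2 cardS] := TS_both_glue jp.
  exists (S1 :|: S2); last by rewrite /sp eq_p side1 side2.
  by rewrite inE Sboth -(eqn_add2r #|Q|) cardS card_sum /=.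
Qed.

Lemma card_join_pairs_tuple m (p : tup) : Fjoin adj par bag t t1 t2 I Q d = Some m ->
  #|[set y | join_pair p y.1 y.2 && (#|y.1| + #|y.2| == m + #|Q|)]| =
  (okT adj par bag t I Q p && (costT adj par bag t1 t2 Q p == Some m)) *
  (let: (I1, I2, d1, d2) := p in gDP adj par bag t1 I1 Q d1 * gDP adj par bag t2 I2 Q d2).
Proof.
move=> Fm; case: p => [[[I1 I2] d1] d2]; rewrite /join_pair; cbn [fst snd].
case okp: (okT adj par bag t I Q (I1, I2, d1, d2)); last first.
  by rewrite mul0n; apply: eq_card0 => y; rewrite !inE.
have -> : [set y | [&& true, y.1 \in TS t1 I1 Q d1 & y.2 \in TS t2 I2 Q d2]
                   && (#|y.1| + #|y.2| == m + #|Q|)] =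
          [set y in setX (TS t1 I1 Q d1) (TS t2 I2 Q d2) | #|y.1| + #|y.2| == m + #|Q|].
  by apply/setP => y; rewrite !inE.
rewrite /costT !fDP_min_weight.
case f1: (min_weight card (TS t1 I1 Q d1)) => [m1|]; last first.
  by rewrite (min_weight_None f1) mul0n; apply: eq_card0 => y; rewrite !inE.
case f2: (min_weight card (TS t2 I2 Q d2)) => [m2|]; last first.
  by rewrite (min_weight_None f2) mul0n; apply: eq_card0 => y; rewrite !inE andbF.
have : oleq (Fjoin adj par bag t t1 t2 I Q d) (m1 + m2 - #|Q|).
  rewrite /Fjoin oleq_bigmin; apply/existsP; exists (I1, I2, d1, d2).
  by rewrite okp /costT !fDP_min_weight f1 f2 /=.
rewrite Fm /= => le_m.
have [[S1 S1in eq_m1] _] := min_weightP f1.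
have le_Q : #|Q| <= m1 by rewrite -eq_m1 (card_bag_le_TS S1in).
rewrite (card_weight_pairs f1 f2) -?(gDP_card_weight f1) -?(gDP_card_weight f2); last by lia.
by congr (nat_of_bool _ * _); apply/eqP/eqP => [?|[?]]; [congr Some|]; lia.
Qed.

Lemma card_weight_TS_both_Gjoin m : Fjoin adj par bag t t1 t2 I Q d = Some m ->
  card_weight card TS_both m = Gjoin adj par bag t t1 t2 I Q d.
Proof.
move=> Fm; rewrite card_weight_TS_both /join_pairs_at.
rewrite (card_set_pair (fun p y => join_pair p y.1 y.2 && (#|y.1| + #|y.2| == m + #|Q|))).
rewrite /Gjoin [RHS]big_mkcond.
by apply: eq_bigr => p _; rewrite (card_join_pairs_tuple _ Fm) Fm; case: ifP; rewrite ?mul1n.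
Qed.

Lemma TS_both_full : Q != set0 -> TS t I Q d = TS_both.
Proof.
move=> Q_ne0; apply/setP => S; rewrite [RHS]inE; case Sin: (S \in TS t I Q d) => //=.
move: Sin; rewrite inTS => /and5P[_ _ /eqP bagS _ _].
have side_ne0 c : par c = Some t -> S :&: LG c != set0.
  move=> par_c; apply: contra Q_ne0 => /eqP S0; rewrite -subset0 -S0 -bagS.
  exact: setIS (Bv_sub_LG par_c).
by rewrite !side_ne0.
Qed.

Lemma join_nonempty_bag : Q != set0 ->
  fDP adj par bag t I Q d = Fjoin adj par bag t t1 t2 I Q d /\
  (fDP adj par bag t I Q d <> None ->
     gDP adj par bag t I Q d = Gjoin adj par bag t t1 t2 I Q d).
Proof.
move=> Q_ne0; rewrite fDP_min_weight TS_both_full // min_weight_TS_both.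
split=> //; case Fm: (Fjoin _ _ _ _ _ _ _ _ _) => [m|] // _.
rewrite (gDP_card_weight (m := m)) ?fDP_min_weight ?TS_both_full ?min_weight_TS_both //.
exact: card_weight_TS_both_Gjoin.
Qed.

End JoinParams.

Lemma setI_LG_sibling_eq0 (S : {set L}) : S \subset LG t1 -> S :&: Bv t = set0 ->
  S :&: LG t2 = set0.
Proof.
move=> sS S0; apply/setP => l; rewrite in_setI in_set0; apply/andP => -[lS l2].
have : l \in S :&: Bv t by rewrite in_setI lS LG_join_inter ?(subsetP sS).
by rewrite S0 in_set0.
Qed.

Lemma TS_join_child I d (S : {set L}) : S \subset LG t1 ->
  (S \in TS adj par bag t I set0 d) = (S \in TS adj par bag t1 I set0 d).
Proof.
move=> sS; rewrite !inTS (Bv_join_child par_t1) (Bc_join_child par_t1) sS.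
case: (S :&: Bv t =P set0) => [S0|]; last by rewrite !andbF.
have := glue_gamma_bag sS (sub0set (LG t2)) S0 (set0I _).
have := card_glue_gamma_out sS (sub0set (LG t2)) S0 (set0I _).
rewrite setU0 gammaG0 set0I set0D cards0 addn0 gamma_indQ ?sub0set // => -> ->.
have -> : [set c in Bc t | odd (deg adj set0 c)] = set0.
  by apply/setP => c; rewrite !inE deg0 andbF.
by rewrite !symds0 LG_join subsetU ?sS.
Qed.

End JoinNode.

Section JoinEmptyBag.
Variables (L R : finType) (adj : L -> R -> bool) (N : finType) (par : N -> option N)
  (bag : N -> {set L + R}).
Hypothesis Htd : rooted_nice_td adj par bag.
Variables t t1 t2 : N.
Hypotheses (par_t1 : par t1 = Some t) (par_t2 : par t2 = Some t) (t1_neq_t2 : t1 != t2).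
Variables (I : {set R}) (d : nat).

Local Notation TS u := (TS adj par bag u I set0 d).
Local Notation LG := (LG par bag).
Local Notation TS_both := (TS_both adj par bag t t1 t2 I set0 d).

Local Notation card := (fun S : {set L} => #|S|).

Let t2_neq_t1 : t2 != t1. Proof. by rewrite eq_sym. Qed.
Let split12 := setI_LG_join Htd par_t1 par_t2 t1_neq_t2.
Let child1 := TS_join_child Htd par_t1 par_t2 t1_neq_t2 I d.
Let child2 := TS_join_child Htd par_t2 par_t1 t2_neq_t1 I d.
Let sibling1 := setI_LG_sibling_eq0 Htd par_t1 par_t2 t1_neq_t2.
Let sibling2 := setI_LG_sibling_eq0 Htd par_t2 par_t1 t2_neq_t1.
Let min_both := min_weight_TS_both Htd par_t1 par_t2 t1_neq_t2 I set0 d.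

Let TS_child_sub c S : par c = Some t -> S \in TS c ->
  [/\ S != set0, S \subset LG c & S :&: Bv bag t = set0].
Proof.
by move=> par_c; rewrite inTS (Bv_join_child Htd par_t1 par_t2 t1_neq_t2 par_c) => /and5P[? ? /eqP].
Qed.

Lemma TS_join_empty_bag : TS t = TS_both :|: (TS t1 :|: TS t2).
Proof.
apply/setP => S; rewrite !in_setU in_TS_both; apply/idP/idP => [Sin|].
- rewrite Sin /=; have := Sin; rewrite inTS => /and5P[_ sS _ _ _].
  have [S1_0|S1_ne0] := eqVneq (S :&: LG t1) set0.
    have sS2 : S \subset LG t2 by rewrite (split12 sS) S1_0 set0U subsetIr.
    by rewrite -(child2 sS2) Sin !orbT.
  have [S2_0|S2_ne0] := eqVneq (S :&: LG t2) set0; last by [].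
  have sS1 : S \subset LG t1 by rewrite (split12 sS) S2_0 setU0 subsetIr.
  by rewrite -(child1 sS1) Sin orbT.
- case/or3P => [/andP[] //|Sin|Sin].
  + by have [_ sS _] := TS_child_sub par_t1 Sin; rewrite child1.
  + by have [_ sS _] := TS_child_sub par_t2 Sin; rewrite child2.
Qed.

Lemma disjoint_TS_both_children : [disjoint TS_both & TS t1 :|: TS t2].
Proof.
rewrite -setI_eq0; apply/eqP/setP => S; rewrite in_setI in_TS_both in_setU in_set0.
apply/negP => /andP[/and3P[_ ne1 ne2] /orP[] Sin].
- by have [_ sS S0] := TS_child_sub par_t1 Sin; rewrite (sibling1 sS S0) eqxx in ne2.
- by have [_ sS S0] := TS_child_sub par_t2 Sin; rewrite (sibling2 sS S0) eqxx in ne1.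
Qed.

Lemma disjoint_TS_children : [disjoint TS t1 & TS t2].
Proof.
rewrite -setI_eq0; apply/eqP/setP => S; rewrite in_setI in_set0.
apply/negP => /andP[S1in S2in].
have [S_ne0 sS1 S0] := TS_child_sub par_t1 S1in; have [_ sS2 _] := TS_child_sub par_t2 S2in.
by rewrite -(setIidPl sS2) (sibling1 sS1 S0) eqxx in S_ne0.
Qed.

Lemma join_empty_bag :
  fDP adj par bag t I set0 d =
    omin (Fjoin adj par bag t t1 t2 I set0 d)
         (omin (fDP adj par bag t1 I set0 d) (fDP adj par bag t2 I set0 d)) /\
  (fDP adj par bag t I set0 d <> None ->
     gDP adj par bag t I set0 d =
       (fDP adj par bag t I set0 d == Fjoin adj par bag t t1 t2 I set0 d)
         * Gjoin adj par bag t t1 t2 I set0 d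
       + (fDP adj par bag t I set0 d == fDP adj par bag t1 I set0 d)
         * gDP adj par bag t1 I set0 d
       + (fDP adj par bag t I set0 d == fDP adj par bag t2 I set0 d)
         * gDP adj par bag t2 I set0 d).
Proof.
have eq_TS := TS_join_empty_bag; rewrite !fDP_min_weight eq_TS !min_weightU min_both.
split=> //; case fm: (omin _ _) => [m|] // _.
have fm_t : min_weight card (TS t) = Some m by rewrite eq_TS !min_weightU min_both.
have at_min (A : {set {set L}}) : A \subset TS_both :|: (TS t1 :|: TS t2) ->
    card_weight card A m = (Some m == min_weight card A) * card_weight card A m.
  by move=> sA; apply: card_weight_sub fm_t; rewrite eq_TS.
rewrite (gDP_card_weight fm_t) eq_TS card_weightU ?disjoint_TS_both_children //.
rewrite card_weightU ?disjoint_TS_children // addnA.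
have sub1 : TS t1 \subset TS_both :|: (TS t1 :|: TS t2) by rewrite subsetU // subsetUl orbT.
have sub2 : TS t2 \subset TS_both :|: (TS t1 :|: TS t2) by rewrite subsetU // subsetUr orbT.
congr (_ + _ + _).
- rewrite (at_min _ (subsetUl _ _)) min_both; case: eqP => [e|_]; rewrite /= ?mul0n ?mul1n //.
  exact: (card_weight_TS_both_Gjoin Htd par_t1 par_t2 t1_neq_t2 (esym e)).
- rewrite (at_min _ sub1); case: eqP => [e|_]; rewrite /= ?mul0n ?mul1n //.
  by rewrite (gDP_card_weight (esym e)).
- rewrite (at_min _ sub2); case: eqP => [e|_]; rewrite /= ?mul0n ?mul1n //.
  by rewrite (gDP_card_weight (esym e)).
Qed.

End JoinEmptyBag.

Theorem mainTheorem13 (L R : finType) (adj : L -> R -> bool)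
  (N : finType) (par : N -> option N) (bag : N -> {set L + R})
  (Htd : rooted_nice_td adj par bag) (b : nat) (t t1 t2 : N)
  (Ht1 : par t1 = Some t) (Ht2 : par t2 = Some t) (Hne : t1 != t2)
  (I : {set R}) (Q : {set L}) (d : nat)
  (HI : I \subset Bc bag t) (HQ : Q \subset Bv bag t) (Hd : d <= b) :
  (Q != set0 ->
     fDP adj par bag t I Q d = Fjoin adj par bag t t1 t2 I Q d /\
     (fDP adj par bag t I Q d <> None ->
        gDP adj par bag t I Q d = Gjoin adj par bag t t1 t2 I Q d)) /\
  (Q = set0 ->
     fDP adj par bag t I Q d =
       omin (Fjoin adj par bag t t1 t2 I Q d)
            (omin (fDP adj par bag t1 I Q d) (fDP adj par bag t2 I Q d)) /\
     (fDP adj par bag t I Q d <> None ->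
        gDP adj par bag t I Q d =
          (fDP adj par bag t I Q d == Fjoin adj par bag t t1 t2 I Q d)
            * Gjoin adj par bag t t1 t2 I Q d
          + (fDP adj par bag t I Q d == fDP adj par bag t1 I Q d)
            * gDP adj par bag t1 I Q d
          + (fDP adj par bag t I Q d == fDP adj par bag t2 I Q d)
            * gDP adj par bag t2 I Q d)).
Proof.
split; first exact: (join_nonempty_bag Htd Ht1 Ht2 Hne).
by move=> ->; apply: (join_empty_bag Htd Ht1 Ht2 Hne).
Qed.
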